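(* Let $K$ and $L$ be fields, let $\overline{L}$ be an algebraic closure of $L$, and let $q\colon K\to L$ be a multiplicative quadratic map. Then there exist field monomorphisms $\varphi_1,\varphi_2\colon K\to\overline{L}$ such that $q(a)=\varphi_1(a)\,\varphi_2(a)$ for all $a\in K$.
   Context: Let $K,L$ be rings with identity. A map $q\colon K\to L$ is called a multiplicative quadratic map if (i) $q(ab)=q(a)q(b)$ for all $a,b\in K$; (ii) $q(n\cdot 1_K)=n^2\cdot 1_L$ for all $n\in\mathbb{Z}$; (iii) the map $f\colon K\times K\to L$, $f(a,b)=q(a+b)-q(a)-q(b)$, is biadditive. *)

From HB Require Import structures.
From mathcomp Require Import all_boot all_order all_algebra.
Set Implicit Arguments. Unset Strict Implicit. Unset Printing Implicit Defensive.
Import GRing.Theory.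
Local Open Scope ring_scope.

Definition mult_quadratic_map (K L : nzRingType) (q : K -> L) : Prop :=
  [/\ (forall a b : K, q (a * b) = q a * q b),
      (forall n : int, q (n%:~R) = (n ^+ 2)%:~R)
    & (let f := fun a b : K => q (a + b) - q a - q b in
       (forall a b c : K, f (a + b) c = f a c + f b c) /\
       (forall a b c : K, f a (b + c) = f a b + f a c))].

(* Lbar, together with an embedding iota : L -> Lbar, is an algebraic
   closure of L: Lbar is algebraically closed and algebraic over iota(L). *)
Definition is_algebraic_closure (L : fieldType) (Lbar : closedFieldType)
  (iota : {rmorphism L -> Lbar}) : Prop :=
  forall x : Lbar, exists p : {poly L}, p != 0 /\ root (map_poly iota p) x.

From HB Require Import structures.
From mathcomp Require Import all_boot all_order all_algebra.
From mathcomp Require Import ring.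
From Stdlib Require Import Classical.
Set Implicit Arguments. Unset Strict Implicit. Unset Printing Implicit Defensive.
Import GRing.Theory.
Local Open Scope ring_scope.

(* Let q : K -> C be a multiplicative quadratic map, f(a, b) = q(a + b) - q a
   - q b its (symmetric, biadditive) polarization and t(a) = f(a, 1) its
   trace.  Expanding f((a + c) b, (a + c) d) = f(b, d) q(a + c) by
   biadditivity yields the fundamental identity f(ab, cd) + f(ad, cb) = f(a, c) f(b, d), from which section
   Polarization derives the relations between f, t and q used later, notably
   the norm identity
       f(a,c)^2 - t(c) f(a,c) t(a) + q(c) t(a)^2 = q(a) (4 q(c) - t(c)^2).
   The proof then splits on the discriminants t(c)^2 - 4 q(c):
   - if some discriminant is nonzero, let u, v be the two distinct roots of
     X^2 - t(c) X + q(c); for a root r the root form f(a, c) - r t(a),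
     normalized by its value at 1, is a ring morphism, and the norm identity
     shows that q is the product of the morphisms obtained from u and v
     (section RootForms);
   - if all discriminants vanish, each a has a unique half trace h(a) with
     h(a)^2 = q(a) and 2 h(a) = t(a), in every characteristic, and h is a ring
     morphism with q = h^2 (section HalfTrace).
   The corollary applies this to iota \o q; ring morphisms out of a field are
   injective. *)

Lemma rmorphism_of (K R : nzRingType) (g : K -> R) :
  g 1 = 1 -> {morph g : x y / x + y} -> {morph g : x y / x * y} ->
  exists phi : {rmorphism K -> R}, forall x, phi x = g x.
Proof.
move=> g1 gD gM.
have g0 : g 0 = 0 by apply: (@addrI _ (g 0)); rewrite -gD !addr0.
pose phi : {rmorphism K -> R} :=
  HB.pack g (GRing.isNmodMorphism.Build _ _ g (g0, gD))
            (GRing.isMonoidMorphism.Build _ _ g (g1, gM)).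
by exists phi.
Qed.

Lemma monic_quadratic_root (C : closedFieldType) (b c : C) :
  exists r : C, r ^+ 2 - b * r + c = 0.
Proof.
have [r hr] := @solve_monicpoly C 2 (fun i => if i == 0%N then - c else b) isT.
exists r; rewrite hr !big_ord_recr big_ord0 /= expr0 expr1; ring.
Qed.

Definition polar (K L : nzRingType) (q : K -> L) (a b : K) : L :=
  q (a + b) - q a - q b.

Section Polarization.
Variables (K L : comNzRingType) (q : K -> L).
Local Notation f := (polar q).
Local Notation t a := (polar q a 1).

Lemma polarC a b : f a b = f b a.
Proof. by rewrite /polar [b + a]addrC; ring. Qed.

Lemma quadD a b : q (a + b) = q a + q b + f a b.
Proof. by rewrite /polar; ring. Qed.

Hypothesis hq : mult_quadratic_map q.

Lemma quadM a b : q (a * b) = q a * q b.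
Proof. by case: hq. Qed.

Lemma quad1 : q 1 = 1.
Proof. by case: hq => _ qn _; have := qn 1; rewrite expr1n. Qed.

Lemma quad2 : q 2 = 4.
Proof. by case: hq => _ qn _; have := qn 2; rewrite pmulrn. Qed.

Lemma polarDl a b c : f (a + b) c = f a c + f b c.
Proof. by case: hq => _ _ /= [hDl _]; exact: hDl. Qed.

Lemma polarDr a b c : f a (b + c) = f a b + f a c.
Proof. by case: hq => _ _ /= [_ hDr]; exact: hDr. Qed.

Lemma polar_scale x y z : f (x * z) (y * z) = f x y * q z.
Proof. by rewrite /polar -mulrDl !quadM; ring. Qed.

(* The fundamental identity: compare both sides of
   f((a + c) b, (a + c) d) = f(b, d) q(a + c), expanded by biadditivity. *)
Lemma polar_mul a b c d : f (a * b) (c * d) + f (a * d) (c * b) = f a c * f b d.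
Proof.
have E := polar_scale b d (a + c).
rewrite !mulrDr polarDl !polarDr !polar_scale quadD in E.
rewrite [a * b]mulrC [c * d]mulrC [a * d]mulrC [c * b]mulrC (polarC (d * a)).
apply: (@addrI _ (f b d * (q a + q c))).
by transitivity (f b d * (q a + q c + f a c)); [rewrite -E | ]; ring.
Qed.

Lemma trace1 : t 1 = 2.
Proof. by rewrite /polar quad2 quad1; ring. Qed.

Lemma polar_diag a : f a a = 2 * q a.
Proof. by rewrite /polar -mulr2n -(mulr_natl a 2) quadM quad2; ring. Qed.

Lemma trace_mul a b : t (a * b) = t a * t b - f a b.
Proof. by rewrite -(polar_mul a b 1 1) !mulr1 mul1r polarC; ring. Qed.

Lemma polar_square x c : f x (c * c) = f x c * t c - t x * q c.
Proof.
have := polar_mul x 1 c c.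
by rewrite !mulr1 (polarC 1 c) -[X in f (x * c) X]mul1r polar_scale => <-; ring.
Qed.

Lemma polar_trace_sum a b c :
  t a * f b c + t b * f a c = 2 * f (a * b) c + f a b * t c.
Proof.
rewrite -(polar_mul a b 1 c) -(polar_mul b a 1 c) -(polar_mul a c b 1).
by rewrite !mul1r !mulr1 [b * a]mulrC (polarC (b * c)); ring.
Qed.

Lemma polar_trace_prod a b c :
  f (a * b) c * t c = f a c * f b c + q c * (t a * t b - 2 * f a b).
Proof.
rewrite -(polar_mul a b c c) [c * b]mulrC polar_scale polar_square trace_mul.
ring.
Qed.

Lemma polar_norm a c :
  f a c ^+ 2 - t c * f a c * t a + q c * t a ^+ 2 = q a * (4 * q c - t c ^+ 2).
Proof.
have sq : f a c ^+ 2 = f (a * a) (c * c) + 2 * q a * q c.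
  by rewrite expr2 -(polar_mul a a c c) [c * a]mulrC polar_diag quadM; ring.
have aa : f (a * a) c = f a c * t a - t c * q a.
  have := polar_mul a a c 1.
  by rewrite !mulr1 -[X in f X (c * a)]mul1r polar_scale (polarC 1) => <-; ring.
by rewrite sq polar_square aa trace_mul polar_diag; ring.
Qed.
End Polarization.

Section RootForms.
Variables (K : comNzRingType) (C : fieldType) (q : K -> C) (c : K).
Hypothesis hq : mult_quadratic_map q.
Local Notation f := (polar q).
Local Notation t a := (polar q a 1).

(* For a root r of X^2 - t(c) X + q(c), this additive map is multiplicative
   up to the factor root_form r 1. *)
Definition root_form (r : C) (a : K) : C := f a c - r * t a.

Lemma root_formD r a b : root_form r (a + b) = root_form r a + root_form r b.
Proof. by rewrite /root_form !(polarDl hq); ring. Qed.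

Lemma root_form1 r : root_form r 1 = t c - 2 * r.
Proof. by rewrite /root_form (polarC q 1 c) (trace1 hq) mulrC. Qed.

(* The difference of the two sides is a combination of polar_trace_sum,
   polar_trace_prod and the root equation. *)
Lemma root_formM r : r ^+ 2 - t c * r + q c = 0 ->
  forall a b, root_form r (a * b) * root_form r 1 = root_form r a * root_form r b.
Proof.
move=> hr a b.
rewrite root_form1 /root_form (trace_mul hq).
apply/eqP; rewrite -subr_eq0; apply/eqP.
transitivity (r * (t a * f b c + t b * f a c - (2 * f (a * b) c + f a b * t c))
  + (f (a * b) c * t c - (f a c * f b c + q c * (t a * t b - 2 * f a b)))
  + (t a * t b - 2 * f a b) * (r ^+ 2 - t c * r + q c)); first by ring.
by rewrite (polar_trace_sum hq) (polar_trace_prod hq) hr !subrr; ring.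
Qed.

Lemma root_form_norm u v : u + v = t c -> u * v = q c ->
  forall a, root_form u a * root_form v a = q a * (root_form u 1 * root_form v 1).
Proof.
move=> hs hp a; have N := polar_norm hq a c.
rewrite -hs -hp in N; rewrite !root_form1 -hs /root_form.
transitivity (f a c ^+ 2 - (u + v) * f a c * t a + u * v * t a ^+ 2); first by ring.
by rewrite N; ring.
Qed.

Lemma root_form_rmorph r : r ^+ 2 - t c * r + q c = 0 -> root_form r 1 != 0 ->
  exists phi : {rmorphism K -> C}, forall a, phi a = root_form r a / root_form r 1.
Proof.
move=> hr hnz; apply: rmorphism_of => [|a b|a b]; first exact: divff.
  by rewrite root_formD mulrDl.
by rewrite mulf_div -(root_formM hr) invfM mulrA mulfK.
Qed.

Lemma split_of_nonzero_discriminant u :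
  u ^+ 2 - t c * u + q c = 0 -> t c ^+ 2 != 4 * q c ->
  exists phi1 phi2 : {rmorphism K -> C}, forall a, q a = phi1 a * phi2 a.
Proof.
move=> hu hdisc; pose v := t c - u.
have hv : v ^+ 2 - t c * v + q c = 0 by rewrite -hu /v; ring.
have hs : u + v = t c by rewrite /v addrC subrK.
have hp : u * v = q c.
  by transitivity (q c - (u ^+ 2 - t c * u + q c)); [rewrite /v; ring | rewrite hu subr0].
have : root_form u 1 * root_form v 1 != 0.
  have -> : root_form u 1 * root_form v 1 = 4 * q c - t c ^+ 2.
    by rewrite !root_form1 -hs -hp; ring.
  by rewrite subr_eq0 eq_sym.
rewrite mulf_eq0 negb_or => /andP[nzu nzv].
have [phi1 h1] := root_form_rmorph hu nzu.
have [phi2 h2] := root_form_rmorph hv nzv.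
exists phi1, phi2 => a.
by rewrite h1 h2 mulf_div (root_form_norm hs hp) mulfK // mulf_neq0.
Qed.
End RootForms.

Section HalfTrace.
Variables (K : comNzRingType) (C : closedFieldType) (q : K -> C).
Hypothesis hq : mult_quadratic_map q.
Hypothesis hdisc : forall a, polar q a 1 ^+ 2 = 4 * q a.
Local Notation f := (polar q).
Local Notation t a := (polar q a 1).

Definition is_half_trace (a : K) (r : C) : bool :=
  (r ^+ 2 == q a) && (2 * r == t a).

(* Any root of X^2 - t(a) X + q(a), a double root, is a half trace. *)
Lemma half_trace_exists a : exists r, is_half_trace a r.
Proof.
have [r hr] := monic_quadratic_root (t a) (q a).
have ht : 2 * r = t a.
  apply/eqP; rewrite -subr_eq0 -sqrf_eq0; apply/eqP.
  transitivity (4 * (r ^+ 2 - t a * r + q a) + (t a ^+ 2 - 4 * q a)); first by ring.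
  by rewrite hr hdisc subrr; ring.
exists r; apply/andP; split; apply/eqP => //.
transitivity (q a - (r ^+ 2 - t a * r + q a) - (t a - 2 * r) * r); first by ring.
by rewrite hr ht subrr; ring.
Qed.

(* Uniqueness holds in every characteristic, as (r - s)^2 vanishes. *)
Lemma half_trace_unique a r s : is_half_trace a r -> is_half_trace a s -> r = s.
Proof.
move=> /andP[/eqP hr2 /eqP hr] /andP[/eqP hs2 /eqP hs].
apply/eqP; rewrite -subr_eq0 -sqrf_eq0; apply/eqP.
transitivity (s ^+ 2 - q a - (r ^+ 2 - q a) + r * ((2 * r - t a) - (2 * s - t a))).
  by ring.
by rewrite hr2 hs2 hr hs !subrr; ring.
Qed.

Definition half_trace (a : K) : C := xchoose (half_trace_exists a).

Lemma half_trace_spec a : half_trace a ^+ 2 = q a /\ 2 * half_trace a = t a.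
Proof. by have /andP[/eqP -> /eqP ->] := xchooseP (half_trace_exists a). Qed.

Lemma half_traceE a r : r ^+ 2 = q a -> 2 * r = t a -> half_trace a = r.
Proof.
move=> hr2 hr; apply: half_trace_unique (xchooseP (half_trace_exists a)) _.
by rewrite /is_half_trace hr2 hr !eqxx.
Qed.

(* By the norm identity with vanishing discriminant, (f(a, b) - 2 h(a) h(b))^2
   is zero. *)
Lemma polar_half_trace a b : f a b = 2 * half_trace a * half_trace b.
Proof.
have [_ ha] := half_trace_spec a; have [hb2 hb] := half_trace_spec b.
have N := polar_norm hq a b.
rewrite (hdisc b) subrr mulr0 -ha -hb -hb2 in N.
apply/eqP; rewrite -subr_eq0 -sqrf_eq0; apply/eqP.
by rewrite -N; ring.
Qed.

(* Each ring-morphism equation is checked through uniqueness of half traces. *)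
Lemma half_trace_rmorph :
  exists phi : {rmorphism K -> C}, forall a, phi a = half_trace a.
Proof.
apply: rmorphism_of => [|a b|a b].
- by apply: half_traceE; rewrite ?(trace1 hq) ?(quad1 hq); ring.
- have [ha2 ha] := half_trace_spec a; have [hb2 hb] := half_trace_spec b.
  apply: half_traceE; first by rewrite quadD (polar_half_trace a b) -ha2 -hb2; ring.
  by rewrite (polarDl hq) -ha -hb; ring.
- have [ha2 ha] := half_trace_spec a; have [hb2 hb] := half_trace_spec b.
  apply: half_traceE; first by rewrite (quadM hq) -ha2 -hb2; ring.
  by rewrite (trace_mul hq) (polar_half_trace a b) -ha -hb; ring.
Qed.

Lemma split_of_zero_discriminants :
  exists phi1 phi2 : {rmorphism K -> C}, forall a, q a = phi1 a * phi2 a.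
Proof.
have [phi hphi] := half_trace_rmorph.
by exists phi, phi => a; rewrite hphi -expr2; case: (half_trace_spec a).
Qed.
End HalfTrace.

Theorem mult_quadratic_split (K : comNzRingType) (C : closedFieldType) (q : K -> C) :
  mult_quadratic_map q ->
  exists phi1 phi2 : {rmorphism K -> C}, forall a, q a = phi1 a * phi2 a.
Proof.
move=> hq.
have [[c hc] | hzero] := classic (exists c, polar q c 1 ^+ 2 != 4 * q c).
  have [u hu] := monic_quadratic_root (polar q c 1) (q c).
  exact: (split_of_nonzero_discriminant hq hu hc).
apply: split_of_zero_discriminants hq _ => a.
by apply/eqP; apply: contraT => hne; case: hzero; exists a.
Qed.

Lemma mult_quadratic_comp (K L M : nzRingType) (q : K -> L)
    (iota : {rmorphism L -> M}) :
  mult_quadratic_map q -> mult_quadratic_map (iota \o q).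
Proof.
case=> qM qn /= [qDl qDr]; split=> /= [a b | n |].
- by rewrite qM rmorphM.
- by rewrite qn rmorph_int.
have polar_comp a b :
    iota (q (a + b)) - iota (q a) - iota (q b) = iota (polar q a b).
  by rewrite /polar !rmorphB.
split=> a b c; rewrite !polar_comp -rmorphD.
  exact: congr1 (qDl a b c).
exact: congr1 (qDr a b c).
Qed.

Theorem corollary1p3 (K L : fieldType) (Lbar : closedFieldType)
  (iota : {rmorphism L -> Lbar}) (hcl : is_algebraic_closure iota)
  (q : K -> L) (hq : mult_quadratic_map q) :
  exists phi1 phi2 : {rmorphism K -> Lbar},
    [/\ injective phi1, injective phi2 &
        forall a : K, iota (q a) = phi1 a * phi2 a].
Proof.
have [phi1 [phi2 hphi]] := mult_quadratic_split (mult_quadratic_comp iota hq).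
by exists phi1, phi2; split; [exact: fmorph_inj | exact: fmorph_inj | exact: hphi].
Qed.
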